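(* Let $A\in\mathbb{R}^{m\times n}$ with $A\geq 0$ and $A^{\dagger}\geq 0$. Let $A=M-N=U-V$ be two proper regular splittings of $A$ such that $R(M+U-A)=R(A)$ and $N(M+U-A)=N(A)$. Then, with $H=U^{\dagger}VM^{\dagger}N$, $$\rho(H)\leq \min\{\rho(U^{\dagger}V),\rho(M^{\dagger}N)\}<1.$$
   Context: All matrices are real. $X^{\dagger}$ denotes the Moore–Penrose inverse of $X$, and $\rho(\cdot)$ the spectral radius. For a matrix $X$, $X\geq 0$ means that all entries of $X$ are nonnegative and at least one entry is positive; $X\geq Y$ means $X-Y\geq 0$. $R(X)$ and $N(X)$ denote range and null space. A splitting $A=U-V$ is proper if $R(U)=R(A)$ and $N(U)=N(A)$; it is a proper regular splitting if it is proper, $U^{\dagger}\geq 0$ and $V\geq 0$. A matrix $A$ is semi-monotone if $A^{\dagger}\geq 0$. *)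

From mathcomp Require Import all_boot all_order all_algebra.
From mathcomp Require Import reals.
From mathcomp Require Import complex.
Set Implicit Arguments. Unset Strict Implicit. Unset Printing Implicit Defensive.
Import Order.TTheory GRing.Theory Num.Theory.
Local Open Scope ring_scope.

Definition mx_nonneg (R : realType) m n (X : 'M[R]_(m, n)) : Prop :=
  (forall i j, 0 <= X i j) /\ (exists i j, 0 < X i j).

Definition mx_ge (R : realType) m n (X Y : 'M[R]_(m, n)) : Prop :=
  mx_nonneg (X - Y).

(* X is the Moore--Penrose inverse of A (the four Penrose equations;
   for real matrices the adjoint is the transpose). *)
Definition is_MP_inverse (R : realType) m n (A : 'M[R]_(m, n)) (X : 'M[R]_(n, m)) : Prop :=
  [/\ A *m X *m A = A, X *m A *m X = X,
      (A *m X)^T = A *m X & (X *m A)^T = X *m A].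

Definition mx_range (R : realType) m n (X : 'M[R]_(m, n)) : 'cV[R]_m -> Prop :=
  fun x => exists y : 'cV[R]_n, x = X *m y.
Definition mx_null (R : realType) m n (X : 'M[R]_(m, n)) : 'cV[R]_n -> Prop :=
  fun x => X *m x = 0.

Definition proper_splitting (R : realType) m n (A U V : 'M[R]_(m, n)) : Prop :=
  [/\ A = U - V,
      (forall x, mx_range U x <-> mx_range A x) &
      (forall x, mx_null U x <-> mx_null A x)].

Definition proper_regular_splitting (R : realType) m n
    (A U V : 'M[R]_(m, n)) (Ud : 'M[R]_(n, m)) : Prop :=
  [/\ proper_splitting A U V, is_MP_inverse U Ud, mx_nonneg Ud & mx_nonneg V].

(* Spectral radius: the largest modulus of a (complex) eigenvalue, i.e. of a
   root of the characteristic polynomial of A viewed over R[i]. *)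
Definition spectral_radius (R : realType) n (A : 'M[R]_n) : R :=
  \big[Num.max/0]_(z <- sval (closed_field_poly_normal
        (char_poly (map_mx (real_complex R) A))))
    ComplexField.Normc.normc z.

From mathcomp Require Import all_boot all_order all_algebra.
From mathcomp Require Import reals complex.
Import Order.TTheory GRing.Theory Num.Theory.
Local Open Scope ring_scope.
Set Implicit Arguments. Unset Strict Implicit. Unset Printing Implicit Defensive.

(* Let E := A^+ A, the orthogonal projector onto N(A)^perp; it is nonnegative,
   symmetric and idempotent.  For a proper regular splitting A = X - Y one has
   X^+ X = E, so X^+ Y = E - Q with Q := X^+ A, 0 <= Q <= E and E Q = Q = Q E.
   Up to scaling, a column of E is the only nonnegative fixed vector of E supported
   inside the support of that column; hence Q = E diag(g) with diag(g) commuting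
   with E and 0 < g <= 1 on the support of E, i.e. U^+ V = E diag(d_U) and
   M^+ N = E diag(d_M) with 0 <= d < 1 there.  The nonzero eigenvalues of
   E diag(d) are the d_j for the nonzero columns j of E, and
   E diag(d_U) E diag(d_M) = E diag(d_U d_M), which gives both inequalities. *)

Lemma col_mulmx (R : pzSemiRingType) m n p (A : 'M[R]_(m, n)) (B : 'M_(n, p)) j :
  col j (A *m B) = A *m col j B.
Proof. by rewrite !colE mulmxA. Qed.

Lemma col_matrixP (T : Type) m n (A B : 'M[T]_(m, n)) :
  (forall j, col j A = col j B) <-> A = B.
Proof.
split=> [AB|-> //]; apply/matrixP => i j.
by move/colP/(_ i): (AB j); rewrite !mxE.
Qed.

Lemma matrix_neq0_entry (V : nmodType) m n (A : 'M[V]_(m, n)) :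
  A != 0 -> exists i j, A i j != 0.
Proof.
move=> A0; have /existsP[i /existsP[j Aij]] : [exists i, exists j, A i j != 0].
  apply: contraNT A0 => /existsPn A0; apply/eqP/matrixP => i j; rewrite mxE.
  by move/existsPn: (A0 i) => /(_ j)/negbNE/eqP.
by exists i, j.
Qed.

Lemma mulmx_ge0 (R : numDomainType) m n p (A : 'M[R]_(m, n)) (B : 'M_(n, p)) :
  (forall i j, 0 <= A i j) -> (forall i j, 0 <= B i j) ->
  forall i j, 0 <= (A *m B) i j.
Proof.
by move=> A0 B0 i j; rewrite mxE; apply: sumr_ge0 => k _; apply: mulr_ge0.
Qed.

Section IdempotentDiag.
Variables (F : fieldType) (n : nat) (E : 'M[F]_n).
Hypothesis E_idem : E *m E = E.

Lemma eigenvalue_idem_diag (a : 'rV[F]_n) z :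
  comm_mx (diag_mx a) E -> z != 0 -> eigenvalue (E *m diag_mx a) z ->
  exists2 j, col j E != 0 & z = a 0 j.
Proof.
move=> aE z0 /eigenvalueP[x xEa x0].
have xE : x *m E = x.
  apply: (scalerI z0).
  by rewrite scalemxAl -xEa -!mulmxA aE (mulmxA E) E_idem xEa.
have [i [j xj]] := matrix_neq0_entry x0; rewrite (ord1 i) in xj.
exists j.
  apply: contraNneq xj => /colP Ej0.
  rewrite -xE mxE big1 // => k _.
  by move: (Ej0 k); rewrite !mxE => ->; rewrite mulr0.
apply: (mulIf xj).
have := congr1 (fun v : 'rV_n => v 0 j) xEa.
by rewrite mulmxA xE mul_mx_diag !mxE => <-; rewrite mulrC.
Qed.

Lemma idem_diag_mul (a b : 'rV[F]_n) : comm_mx (diag_mx a) E ->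
  E *m diag_mx a *m (E *m diag_mx b) = E *m diag_mx (\row_j (a 0 j * b 0 j)).
Proof.
move=> aE.
by rewrite -mulmxA (mulmxA (diag_mx a)) aE -!mulmxA mulmx_diag (mulmxA E) E_idem.
Qed.

Lemma idem_diag_mulC (a b : 'rV[F]_n) :
  comm_mx (diag_mx a) E -> comm_mx (diag_mx b) E ->
  E *m diag_mx a *m (E *m diag_mx b) = E *m diag_mx b *m (E *m diag_mx a).
Proof.
move=> aE bE; rewrite !idem_diag_mul //.
by congr (_ *m diag_mx _); apply/rowP => j; rewrite !mxE mulrC.
Qed.

Lemma comm_mx_diag_mul (a b : 'rV[F]_n) :
  comm_mx (diag_mx a) E -> comm_mx (diag_mx b) E ->
  comm_mx (diag_mx (\row_j (a 0 j * b 0 j))) E.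
Proof.
by move=> aE bE; rewrite -mulmx_diag; apply/comm_mx_sym/comm_mxM; apply/comm_mx_sym.
Qed.

Lemma eigenvalue_idem_diag_col (a : 'rV[F]_n) j :
  E^T = E -> comm_mx (diag_mx a) E -> col j E != 0 ->
  eigenvalue (E *m diag_mx a) (a 0 j).
Proof.
move=> ET aE Ej; apply/eigenvalueP; exists (row j E).
  by rewrite -row_mul mulmxA E_idem -aE row_mul row_diag_mx -scalemxAl -rowE.
by rewrite -{1}ET -tr_col trmx_eq0.
Qed.

End IdempotentDiag.

Section SpectralRadius.
Variable R : realType.
Local Notation toC := (real_complex R).
Local Notation normc := (@ComplexField.Normc.normc R).

Lemma normc_real (a : R) : normc (toC a) = `|a|.
Proof. by rewrite /ComplexField.Normc.normc /= expr0n /= addr0 sqrtr_sqr. Qed.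

Lemma spectral_radius_ge0 n (X : 'M[R]_n) : 0 <= spectral_radius X.
Proof. by rewrite /spectral_radius bigmax_ge_id. Qed.

Lemma eigenvalue_le_spectral_radius n (X : 'M[R]_n) z :
  eigenvalue (map_mx toC X) z -> normc z <= spectral_radius X.
Proof.
rewrite eigenvalue_root_char /spectral_radius.
case: closed_field_poly_normal => r /= r_roots.
rewrite r_roots (monicP (char_poly_monic _)) scale1r root_prod_XsubC => zr.
exact: le_bigmax_seq.
Qed.

Lemma spectral_radius_le n (X : 'M[R]_n) c : 0 <= c ->
  (forall z, eigenvalue (map_mx toC X) z -> normc z <= c) ->
  spectral_radius X <= c.
Proof.
move=> c0 eig_le; rewrite /spectral_radius.
case: closed_field_poly_normal => r /= r_roots.
rewrite big_seq_cond; apply: bigmax_le => // z /andP[zr _]; apply: eig_le.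
by rewrite eigenvalue_root_char r_roots (monicP (char_poly_monic _)) scale1r root_prod_XsubC.
Qed.

Lemma spectral_radius_lt n (X : 'M[R]_n) c : 0 < c ->
  (forall z, eigenvalue (map_mx toC X) z -> normc z < c) ->
  spectral_radius X < c.
Proof.
move=> c0 eig_lt; rewrite /spectral_radius.
case: closed_field_poly_normal => r /= r_roots.
rewrite big_seq_cond; apply: bigmax_lt => // z /andP[zr _]; apply: eig_lt.
by rewrite eigenvalue_root_char r_roots (monicP (char_poly_monic _)) scale1r root_prod_XsubC.
Qed.

Section IdempotentDiagSpectrum.
Variables (n : nat) (E : 'M[R]_n).
Hypotheses (E_sym : E^T = E) (E_idem : E *m E = E).

Lemma map_comm_diag (d : 'rV[R]_n) : comm_mx (diag_mx d) E ->
  comm_mx (diag_mx (map_mx toC d)) (map_mx toC E).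
Proof. by rewrite /comm_mx -map_diag_mx -!map_mxM => ->. Qed.

Let mapE_idem : map_mx toC E *m map_mx toC E = map_mx toC E.
Proof. by rewrite -map_mxM E_idem. Qed.

Lemma eigenvalue_map_idem_diag (d : 'rV[R]_n) z :
  comm_mx (diag_mx d) E -> z != 0 -> eigenvalue (map_mx toC (E *m diag_mx d)) z ->
  exists2 j, col j E != 0 & z = toC (d 0 j).
Proof.
move=> dE z0; rewrite map_mxM map_diag_mx.
case/(eigenvalue_idem_diag mapE_idem (map_comm_diag dE) z0) => j Ej ->.
by exists j; rewrite ?mxE // -(map_mx_eq0 toC) map_col.
Qed.

Lemma spectral_radius_idem_diag_ge (d : 'rV[R]_n) j :
  comm_mx (diag_mx d) E -> col j E != 0 -> `|d 0 j| <= spectral_radius (E *m diag_mx d).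
Proof.
move=> dE Ej; rewrite -normc_real; apply: eigenvalue_le_spectral_radius.
have ECj : col j (map_mx toC E) != 0 by rewrite -map_col map_mx_eq0.
have EC_sym : (map_mx toC E)^T = map_mx toC E by rewrite map_trmx E_sym.
have := eigenvalue_idem_diag_col mapE_idem EC_sym (map_comm_diag dE) ECj.
by rewrite map_mxM map_diag_mx mxE.
Qed.

Lemma spectral_radius_idem_diag_lt1 (d : 'rV[R]_n) : comm_mx (diag_mx d) E ->
  (forall j, col j E != 0 -> `|d 0 j| < 1) -> spectral_radius (E *m diag_mx d) < 1.
Proof.
move=> dE d_lt1; apply: spectral_radius_lt => // z.
have [-> _|z0 /(eigenvalue_map_idem_diag dE z0)[j Ej ->]] := eqVneq z 0.
  by rewrite ComplexField.Normc.normc0.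
by rewrite normc_real d_lt1.
Qed.

Lemma spectral_radius_idem_diag_mul_le (d1 d2 : 'rV[R]_n) :
  comm_mx (diag_mx d1) E -> comm_mx (diag_mx d2) E ->
  (forall j, col j E != 0 -> `|d2 0 j| <= 1) ->
  spectral_radius (E *m diag_mx d1 *m (E *m diag_mx d2)) <=
    spectral_radius (E *m diag_mx d1).
Proof.
move=> d1E d2E d2_le1; rewrite (idem_diag_mul E_idem _ d1E).
apply: spectral_radius_le (spectral_radius_ge0 _) _ => z.
have [-> _|z0] := eqVneq z 0.
  by rewrite ComplexField.Normc.normc0 spectral_radius_ge0.
case/(eigenvalue_map_idem_diag (comm_mx_diag_mul d1E d2E) z0) => j Ej ->.
rewrite normc_real mxE normrM.
apply: le_trans (spectral_radius_idem_diag_ge d1E Ej).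
by rewrite ler_piMr ?d2_le1.
Qed.

End IdempotentDiagSpectrum.
End SpectralRadius.

Section NonnegSymmetricIdempotent.
Variables (R : realFieldType) (n : nat) (E : 'M[R]_n).
Hypotheses (E_ge0 : forall i j, 0 <= E i j) (E_sym : E^T = E) (E_idem : E *m E = E).

Let E_symE i j : E i j = E j i.
Proof. by rewrite -{1}E_sym mxE. Qed.

Let E_gt0E i j : (0 < E i j) = (E i j != 0).
Proof. by rewrite lt_def E_ge0 andbT. Qed.

Lemma idem_gt0_trans l k j : 0 < E l k -> 0 < E k j -> 0 < E l j.
Proof.
move=> Elk Ekj; rewrite -E_idem mxE (bigD1 k) //=.
apply: (lt_le_trans (mulr_gt0 Elk Ekj)); rewrite lerDl.
by apply: sumr_ge0 => i _; apply: mulr_ge0.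
Qed.

Lemma idem_fixed_eq0 (u : 'cV[R]_n) l i : (forall k, 0 <= u k 0) -> E *m u = u ->
  u l 0 = 0 -> 0 < E l i -> u i 0 = 0.
Proof.
move=> u0 Eu ul Eli.
have := congr1 (fun v : 'cV_n => v l 0) Eu; rewrite mxE ul => Eu_l.
have /eqP := @psumr_eq0P _ _ _ _ (fun k _ => mulr_ge0 (E_ge0 l k) (u0 k)) Eu_l i isT.
by rewrite mulf_eq0 gt_eqF //= => /eqP.
Qed.

(* Perron-type rigidity: subtracting the largest multiple of [col j E] that stays
   below [w] leaves a nonnegative fixed vector vanishing at some [l] in the support
   of [col j E], and [idem_fixed_eq0] propagates that zero to the whole support. *)
Lemma idem_fixed_col_scale j (w : 'cV[R]_n) :
  (forall i, 0 <= w i 0) -> E *m w = w -> (forall i, E i j = 0 -> w i 0 = 0) ->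
  exists t, w = t *: col j E.
Proof.
move=> w0 Ew w_supp.
have Eij0 i : ~~ (0 < E i j) -> E i j = 0 by rewrite E_gt0E negbK => /eqP.
case: (pickP (fun i => 0 < E i j)) => [i0 Ei0 | Ej0]; last first.
  by exists 0; apply/colP => i; rewrite !mxE mul0r w_supp // Eij0 ?Ej0.
pose q i := w i 0 / E i j.
have [l Elj q_min] := arg_minP (P := fun i => 0 < E i j) q Ei0.
exists (q l); pose u := w - q l *: col j E.
have uE i : u i 0 = w i 0 - q l * E i j by rewrite !mxE.
have u0 i : 0 <= u i 0.
  rewrite uE subr_ge0; have [Eij|/Eij0->] := boolP (0 < E i j).
    by rewrite -ler_pdivlMr // q_min.
  by rewrite mulr0.
have Eu : E *m u = u by rewrite mulmxBr -scalemxAr -col_mulmx E_idem Ew.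
have ul : u l 0 = 0 by rewrite uE /q divfK ?subrr // gt_eqF.
apply/eqP; rewrite -subr_eq0 -/u; apply/eqP/colP => i; rewrite [RHS]mxE.
have [Eij|/Eij0 Eij] := boolP (0 < E i j); last by rewrite uE w_supp // Eij mulr0 subrr.
by apply: idem_fixed_eq0 u0 Eu ul _; apply: idem_gt0_trans Elj _; rewrite E_symE.
Qed.

Lemma idem_col_scale i k : 0 < E i k -> exists s, col i E = s *: col k E.
Proof.
move=> Eik; apply: idem_fixed_col_scale => [l||l Elk].
- by rewrite mxE.
- by rewrite -col_mulmx E_idem.
rewrite mxE; apply/eqP; apply: contraT; rewrite -E_gt0E => Eli.
by move: (idem_gt0_trans Eli Eik); rewrite Elk ltxx.
Qed.

Section Dominated.
Variable Q : 'M[R]_n.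
Hypotheses (Q_ge0 : forall i j, 0 <= Q i j) (Q_le : forall i j, Q i j <= E i j).
Hypotheses (EQ : E *m Q = Q) (QE : Q *m E = Q).

Lemma dominated_idem_col_scale : exists g : 'rV[R]_n, Q = E *m diag_mx g.
Proof.
have /fin_all_exists[g Qg] : forall j, exists t : R, col j Q = t *: col j E.
  move=> j; apply: idem_fixed_col_scale => [i||i Eij].
  - by rewrite mxE.
  - by rewrite -col_mulmx EQ.
  by rewrite mxE; apply/le_anti; rewrite Q_ge0 -Eij Q_le.
exists (\row_j g j); apply/matrixP => i j; rewrite mul_mx_diag !mxE.
by move/colP/(_ i): (Qg j); rewrite !mxE mulrC.
Qed.

Lemma dominated_idem_diag : (forall j, col j E != 0 -> col j Q != 0) ->
  exists g : 'rV[R]_n, [/\ Q = E *m diag_mx g, comm_mx (diag_mx g) E &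
    forall j, col j E != 0 -> 0 < g 0 j <= 1].
Proof.
move=> Q_supp; have [g Qg] := dominated_idem_col_scale.
have QgE i j : Q i j = E i j * g 0 j by rewrite Qg mul_mx_diag mxE.
have colQ j : col j Q = g 0 j *: col j E by apply/colP => i; rewrite !mxE QgE mulrC.
exists g; split=> //.
  apply/matrixP => i k; rewrite mul_diag_mx mul_mx_diag !mxE.
  have [Eik|/negbNE/eqP->] := boolP (E i k != 0); last by rewrite mulr0 mul0r.
  have [s Es] := idem_col_scale (etrans (E_gt0E i k) Eik).
  have g_i : Q *m col i E = g 0 i *: col i E by rewrite -col_mulmx QE colQ.
  have g_k : Q *m col i E = g 0 k *: col i E.
    by rewrite Es -scalemxAr -col_mulmx QE colQ scalerA mulrC -scalerA.
  have Eki : E k i != 0 by rewrite E_symE.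
  have /colP/(_ k) := etrans (esym g_i) g_k.
  by rewrite !mxE => /(mulIf Eki)->; rewrite mulrC.
move=> j Ej; have [i [? Eij]] := matrix_neq0_entry Ej; rewrite mxE -E_gt0E in Eij.
have [i' [? Qi'j]] := matrix_neq0_entry (Q_supp j Ej).
rewrite lt_def -(pmulr_rge0 _ Eij) -QgE Q_ge0 -(ler_pM2l Eij) mulr1 -QgE Q_le !andbT.
by apply: contraNneq Qi'j => g0; rewrite mxE QgE g0 mulr0.
Qed.

End Dominated.
End NonnegSymmetricIdempotent.

Lemma idem_ker_mulmx (R : pzRingType) n (P E : 'M[R]_n) : E *m E = E ->
  (forall x : 'cV_n, E *m x = 0 -> P *m x = 0) -> P *m E = P.
Proof.
move=> E_idem kerEP; apply/eqP; rewrite -subr_eq0 -{2}(mulmx1 P) -mulmxBr.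
apply/eqP/col_matrixP => j; rewrite col_mulmx col0; apply: kerEP.
by rewrite -col_mulmx mulmxBr mulmx1 E_idem subrr col0.
Qed.

Lemma sym_idem_eq_ker (R : comPzRingType) n (P E : 'M[R]_n) :
  P^T = P -> P *m P = P -> E^T = E -> E *m E = E ->
  (forall x : 'cV_n, P *m x = 0 <-> E *m x = 0) -> P = E.
Proof.
move=> P_sym P_idem E_sym E_idem kerPE.
have PE : P *m E = P := idem_ker_mulmx E_idem (fun x => proj2 (kerPE x)).
have EP : E *m P = E := idem_ker_mulmx P_idem (fun x => proj1 (kerPE x)).
by rewrite -P_sym -PE trmx_mul E_sym P_sym EP.
Qed.

Section MoorePenrose.
Variable R : realType.

Lemma MP_inverse_sym_idem m n (A : 'M[R]_(m, n)) Ad : is_MP_inverse A Ad ->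
  (Ad *m A)^T = Ad *m A /\ Ad *m A *m (Ad *m A) = Ad *m A.
Proof. by case=> _ AdAAd _ AdA_sym; rewrite mulmxA AdAAd. Qed.

Lemma MP_inverse_kerE m n (A : 'M[R]_(m, n)) Ad (x : 'cV_n) : is_MP_inverse A Ad ->
  Ad *m A *m x = 0 <-> A *m x = 0.
Proof.
case=> AAdA _ _ _; split=> [AdAx|Ax]; last by rewrite -mulmxA Ax mulmx0.
by rewrite -AAdA -!mulmxA (mulmxA Ad) AdAx mulmx0.
Qed.

(* A proper splitting does not change the null space, hence not the orthogonal
   projector [X^+ X] onto its complement. *)
Lemma proper_splitting_MP_proj m n (A X Y : 'M[R]_(m, n)) Ad Xd :
  is_MP_inverse A Ad -> is_MP_inverse X Xd -> proper_splitting A X Y ->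
  Xd *m X = Ad *m A.
Proof.
move=> hA hX [_ _ kerXA].
have [XdX_sym XdX_idem] := MP_inverse_sym_idem hX.
have [AdA_sym AdA_idem] := MP_inverse_sym_idem hA.
apply: sym_idem_eq_ker => // x.
by rewrite (MP_inverse_kerE x hX) (MP_inverse_kerE x hA); apply: kerXA.
Qed.

Lemma proper_regular_splitting_diag m n (A X Y : 'M[R]_(m, n)) Ad Xd :
  (forall i j, 0 <= A i j) -> is_MP_inverse A Ad -> (forall i j, 0 <= Ad i j) ->
  proper_regular_splitting A X Y Xd ->
  exists d : 'rV[R]_n, [/\ Xd *m Y = Ad *m A *m diag_mx d,
    comm_mx (diag_mx d) (Ad *m A) & forall j, col j (Ad *m A) != 0 -> 0 <= d 0 j < 1].
Proof.
move=> A_ge0 hA Ad_ge0 [hS hX [Xd_ge0 _] [Y_ge0 _]].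
have [E_sym E_idem] := MP_inverse_sym_idem hA.
have XdX := proper_splitting_MP_proj hA hX hS.
case: hS => AXY rangeXA _; case: (hX) => XXdX XdXXd _ _; case: (hA) => AAdA _ _ _.
have XXdA : X *m Xd *m A = A.
  apply/col_matrixP => j; rewrite col_mulmx.
  have [y ->] : mx_range X (col j A) by apply/rangeXA; exists (delta_mx j 0); rewrite colE.
  by rewrite mulmxA XXdX.
have XdY : Xd *m Y = Ad *m A - Xd *m A.
  by rewrite -XdX -mulmxBr AXY opprB addrC subrK.
have EQ : Ad *m A *m (Xd *m A) = Xd *m A by rewrite -XdX mulmxA XdXXd.
have QE : Xd *m A *m (Ad *m A) = Xd *m A by rewrite -mulmxA (mulmxA A) AAdA.
have AdXQ : Ad *m X *m (Xd *m A) = Ad *m A by rewrite -!mulmxA (mulmxA X) XXdA.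
have E_ge0 := mulmx_ge0 Ad_ge0 A_ge0.
have Q_ge0 := mulmx_ge0 Xd_ge0 A_ge0.
have EQ_ge0 := mulmx_ge0 Xd_ge0 Y_ge0; rewrite XdY in EQ_ge0 *.
set E := Ad *m A in E_ge0 EQ_ge0 E_sym E_idem EQ QE AdXQ *.
set Q := Xd *m A in Q_ge0 EQ_ge0 EQ QE AdXQ *.
clearbody E Q.
have Q_le i j : Q i j <= E i j by rewrite -subr_ge0; move: (EQ_ge0 i j); rewrite !mxE.
have Q_supp j : col j E != 0 -> col j Q != 0.
  by apply: contraNneq => Qj0; apply/eqP; rewrite -AdXQ col_mulmx Qj0 mulmx0.
have [g [Qg gE g_bd]] := dominated_idem_diag E_ge0 E_sym E_idem Q_ge0 Q_le EQ QE Q_supp.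
exists (\row_j (1 - g 0 j)); split.
- by rewrite Qg; apply/matrixP => i j; rewrite !mul_mx_diag !mxE mulrBr mulr1.
- apply/matrixP => i j; have /matrixP/(_ i j) := gE.
  by rewrite !mul_diag_mx !mul_mx_diag !mxE mulrBl mulrBr mul1r mulr1 => ->.
- move=> j /g_bd /andP[g_gt0 g_le1].
  by rewrite mxE subr_ge0 g_le1 /= ltrBlDr ltrDl.
Qed.

End MoorePenrose.

Unset Implicit Arguments.
Theorem theorem4p5 (R : realType) (m n : nat)
    (A M N U V : 'M[R]_(m, n)) (Ad Md Ud : 'M[R]_(n, m)) :
  mx_nonneg A ->
  is_MP_inverse A Ad -> mx_nonneg Ad ->
  proper_regular_splitting A M N Md ->
  proper_regular_splitting A U V Ud ->
  (forall x, mx_range (M + U - A) x <-> mx_range A x) ->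
  (forall x, mx_null (M + U - A) x <-> mx_null A x) ->
  let H := Ud *m V *m Md *m N in
  spectral_radius H <= Num.min (spectral_radius (Ud *m V)) (spectral_radius (Md *m N))
  /\ Num.min (spectral_radius (Ud *m V)) (spectral_radius (Md *m N)) < 1.
Proof.
move=> [A_ge0 _] hA [Ad_ge0 _] hM hU _ _ H.
have [E_sym E_idem] := MP_inverse_sym_idem hA.
have [dM [MdN dME dM_bd]] := proper_regular_splitting_diag A_ge0 hA Ad_ge0 hM.
have [dU [UdV dUE dU_bd]] := proper_regular_splitting_diag A_ge0 hA Ad_ge0 hU.
have abs_lt1 (d : 'rV[R]_n) : (forall j, col j (Ad *m A) != 0 -> 0 <= d 0 j < 1) ->
    forall j, col j (Ad *m A) != 0 -> `|d 0 j| < 1.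
  by move=> d_bd j /d_bd /andP[d_ge0 d_lt1]; rewrite ger0_norm.
have dU_lt1 := abs_lt1 dU dU_bd; have dM_lt1 := abs_lt1 dM dM_bd.
have -> : H = Ad *m A *m diag_mx dU *m (Ad *m A *m diag_mx dM).
  by rewrite /H -mulmxA UdV MdN.
rewrite UdV MdN; split; last by rewrite gt_min spectral_radius_idem_diag_lt1.
rewrite le_min spectral_radius_idem_diag_mul_le //=; last by move=> j /dM_lt1/ltW.
rewrite (idem_diag_mulC E_idem dUE dME) spectral_radius_idem_diag_mul_le //.
by move=> j /dU_lt1/ltW.
Qed.
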